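(* Let $k\in\{3,4\}$. On $\Gamma_{k+2}\setminus\Omega$ the following hold, with constants independent of $N$, $\lambda$ and the frequencies: (1) $|M_{k+2}|\lesssim m(\xi_1^* )^2|\xi_1^*||\xi_3^*|^2$; (2) if moreover $|\xi_1^*|\sim|\xi_2^*|\gtrsim N\gg|\xi_3^*|\sim|\xi_4^*|$, then $|M_{k+2}|\lesssim|\xi_3^*||\xi_4^*||\xi_5^*|$; (3) if moreover $|\xi_4^*|\gg|\xi_5^*|$, then $|M_{k+2}|\lesssim m(\xi_1^* )^2|\xi_1^*|^2|\xi_5^*|$.
   Context: Fix $k\in\{3,4\}$, $s\in[\tfrac12,1)$, a large parameter $N\ge1$ and a period $\lambda\ge1$. The frequency variables range over $\frac1\lambda\mathbb Z$. The multiplier $m=m_{N,s}:\mathbb R\to(0,1]$ is a smooth even function, nonincreasing in $|\xi|$, with $m(\xi)=1$ for $|\xi|\le N$ and $m(\xi)=N^{1-s}|\xi|^{s-1}$ for $|\xi|>2N$. For $n\ge2$, $\Gamma_n=\{(\xi_1,\dots,\xi_n)\in(\frac1\lambda\mathbb Z)^n:\xi_1+\dots+\xi_n=0\}$. Write $m_j=m(\xi_j)$, $\alpha_n=\xi_1^3+\dots+\xi_n^3$, $M_{k+2}=i(m_1^2\xi_1^3+\dots+m_{k+2}^2\xi_{k+2}^3)$. For a tuple of frequencies, $\xi_1^*,\xi_2^*,\dots$ denotes its rearrangement with $|\xi_1^*|\ge|\xi_2^*|\ge\cdots$; when $k=3$ set $\xi_6^*=0$. Notation: $A\lesssim B$ means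 $A\le CB$ with $C$ independent of $N,\lambda$ and the frequencies; $A\sim B$ means $A\lesssim B\lesssim A$; $A\ll B$ (or $B\gg A$) means $A\le C_0^{-1}B$ for a fixed sufficiently large absolute constant $C_0$. The non-resonant set is $\Omega=\Omega_1\cup\Omega_2\cup\Omega_3\cup\Omega_4\subset\Gamma_{k+2}$, where $\Omega_1=\{|\xi_3^*|\gg|\xi_4^*|\}$; $\Omega_2=\{|\xi_1^*|\sim|\xi_2^*|\gtrsim N\gg|\xi_3^*|\sim|\xi_4^*|,\ |{\xi_1^*}^3+{\xi_2^*}^3|\gg|{\xi_3^*}^3+\dots+{\xi_{k+2}^*}^3|\}$; $\Omega_3=\{|\xi_1^*|\gg|\xi_3^*|,\ |\xi_1^*+\xi_2^*||\xi_1^*|\gg|\xi_3^*|^2\}$; $\Omega_4=\{|\xi_4^*|\gg|\xi_5^*|,\ |\xi_1^*+\xi_2^*||\xi_1^*+\xi_3^*||\xi_1^*+\xi_4^*|\gg|\xi_5^*||\xi_1^*|^2,\ |m(\xi_1^* )^2{\xi_1^*}^3+\dots+m(\xi_4^* )^2{\xi_4^*}^3|\gg|m(\xi_5^* )^2{\xi_5^*}^3+m(\xi_6^* )^2{\xi_6^*}^3|\}$ (each set consisting of the points of $\Gamma_{k+2}$ satisfying the listed conditions). *)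

From Stdlib Require Import Reals Lra Lia ZArith.
Open Scope R_scope.

Fixpoint sumR (n : nat) (f : nat -> R) : R :=
  match n with
  | O => 0
  | S n' => sumR n' f + f n'
  end.

Definition smooth (f : R -> R) : Prop :=
  exists D : nat -> R -> R,
    D O = f /\ forall (j : nat) (x : R), derivable_pt_lim (D j) x (D (S j) x).

Definition profile (s : R) (phi : R -> R) : Prop :=
  smooth phi /\
  (forall x, phi (- x) = phi x) /\
  (forall x y, Rabs x <= Rabs y -> phi y <= phi x) /\
  (forall x, Rabs x <= 1 -> phi x = 1) /\
  (forall x, 2 < Rabs x -> phi x = Rpower (Rabs x) (s - 1)).

(* The multiplier m_{N,s}(xi) = phi(xi/N); it equals 1 for |xi| <= N and
   N^(1-s) |xi|^(s-1) for |xi| > 2N. *)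
Definition mult (phi : R -> R) (N x : R) : R := phi (x / N).

(* Frequency tuples (xi_1,...,xi_n) are encoded as xi : nat -> R, xi j being
   the (j+1)-th frequency, j < n.  Gamma_n with frequencies in (1/lam) Z. *)
Definition in_Gamma (n : nat) (lam : R) (xi : nat -> R) : Prop :=
  (forall j, (j < n)%nat -> exists z : Z, xi j = IZR z / lam) /\
  sumR n xi = 0.

Definition sorting_perm (n : nat) (xi : nat -> R) (p : nat -> nat) : Prop :=
  (forall i, (i < n)%nat -> (p i < n)%nat) /\
  (forall i j, (i < n)%nat -> (j < n)%nat -> p i = p j -> i = j) /\
  (forall i j, (i <= j)%nat -> (j < n)%nat -> Rabs (xi (p j)) <= Rabs (xi (p i))).

(* xstar n xi p j = xi_j^* (1-based), and 0 for j outside 1..n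
   (so xi_6^* = 0 when n = 5). *)
Definition xstar (n : nat) (xi : nat -> R) (p : nat -> nat) (j : nat) : R :=
  if andb (Nat.leb 1 j) (Nat.leb j n) then xi (p (j - 1)%nat) else 0.

(* |M_{n}| / with M_n = i * sum_j m_j^2 xi_j^3 : we record the real sum. *)
Definition Msum (phi : R -> R) (N : R) (n : nat) (xi : nat -> R) : R :=
  sumR n (fun j => (mult phi N (xi j)) ^ 2 * (xi j) ^ 3).

(* Asymptotic notation with explicit constants:
   A << B  (i.e. B >> A)  :=  A <= B / C0     (C0 the fixed large constant)
   A ~ B                  :=  A <= K B and B <= K A
   A <~ B                 :=  A <= K B                                     *)
Definition ll (C0 A B : R) : Prop := A <= B / C0.
Definition sim (K A B : R) : Prop := A <= K * B /\ B <= K * A.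
Definition lsim (K A B : R) : Prop := A <= K * B.

Section Omegas.
Variables (phi : R -> R) (N K C0 : R) (n : nat) (xi : nat -> R) (p : nat -> nat).
Let X j := xstar n xi p j.
Let a j := Rabs (X j).
Let mm j := mult phi N (X j).

Definition Omega1 : Prop := ll C0 (a 4%nat) (a 3%nat).

Definition Omega2 : Prop :=
  sim K (a 1%nat) (a 2%nat) /\ lsim K N (a 2%nat) /\ ll C0 (a 3%nat) N /\
  sim K (a 3%nat) (a 4%nat) /\
  ll C0 (Rabs (sumR (n - 2) (fun j => X (j + 3)%nat ^ 3)))
        (Rabs (X 1%nat ^ 3 + X 2%nat ^ 3)).

Definition Omega3 : Prop :=
  ll C0 (a 3%nat) (a 1%nat) /\
  ll C0 (a 3%nat ^ 2) (Rabs (X 1%nat + X 2%nat) * a 1%nat).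

Definition Omega4 : Prop :=
  ll C0 (a 5%nat) (a 4%nat) /\
  ll C0 (a 5%nat * a 1%nat ^ 2)
        (Rabs (X 1%nat + X 2%nat) * Rabs (X 1%nat + X 3%nat) * Rabs (X 1%nat + X 4%nat)) /\
  ll C0 (Rabs (mm 5%nat ^ 2 * X 5%nat ^ 3 + mm 6%nat ^ 2 * X 6%nat ^ 3))
        (Rabs (mm 1%nat ^ 2 * X 1%nat ^ 3 + mm 2%nat ^ 2 * X 2%nat ^ 3 +
               mm 3%nat ^ 2 * X 3%nat ^ 3 + mm 4%nat ^ 2 * X 4%nat ^ 3)).

Definition Omega : Prop := Omega1 \/ Omega2 \/ Omega3 \/ Omega4.
End Omegas.

(* Write cubic_of m x = m(x)^2 x^3, so that M_{k+2} = sum_j cubic_of m_N (xi_j).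
   The proof is organised in four layers.
   1. Properties of the profile phi: positivity, phi <= 1, phi >= 1/2 on
      [-4,4], and quasi-monotonicity of phi(x)^2 |x|.
   2. Calculus: evenness of phi and its explicit tail |x|^(s-1) give the
      symbol bounds |phi'(x)| |x| <~ phi(x) and |phi''(x)| x^2 <~ phi(x);
      with the mean value theorem, g = cubic_of phi then obeys on [-R,R]
        |g u - g v| <~ phi(R)^2 R^2 |u - v|                  (Lipschitz)
        |g(u+a) - g u - g(v+a) + g v| <~ phi(R)^2 R |a| |u - v|  (2nd diff.)
      and both bounds survive the rescaling cubic_of m_N x = N^3 g(x/N).
   3. Six-frequency estimates: for any multiplier m with these properties
      and six frequencies of decreasing modulus summing to zero, failure of
      Omega_3, Omega_2, Omega_4 yields bounds (1), (2), (3) respectively.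
   4. Bookkeeping: the sorted frequencies are a permutation of the xi_j
      (with xi_6^* = 0 when k = 3), so M_{k+2} is the six-term sum of layer
      3, and the theorem follows. *)

From Stdlib Require Import Reals Lra Lia Psatz List Permutation Classical.
Open Scope R_scope.

Definition cubic_of (m : R -> R) (x : R) : R := m x ^ 2 * x ^ 3.

Section Profile.
Variables (s : R) (phi : R -> R).
Hypothesis Hs : 1/2 <= s < 1.
Hypothesis Hp : profile s phi.

Lemma phi_even y : phi (- y) = phi y.
Proof. destruct Hp as (_ & H & _). apply H. Qed.

Lemma phi_abs y : phi (Rabs y) = phi y.
Proof. unfold Rabs; destruct (Rcase_abs y); [apply phi_even | reflexivity]. Qed.

Lemma phi_antitone y z : Rabs y <= Rabs z -> phi z <= phi y.
Proof. destruct Hp as (_ & _ & H & _). apply H. Qed.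

Lemma phi_tail y : 2 < Rabs y -> phi y = Rpower (Rabs y) (s - 1).
Proof. destruct Hp as (_ & _ & _ & _ & H). apply H. Qed.

(* phi is positive: it dominates its (positive) value far out in the tail. *)
Lemma phi_pos y : 0 < phi y.
Proof.
  pose proof (Rabs_pos y).
  assert (Hfar : 2 < Rabs (Rabs y + 3)) by (rewrite Rabs_pos_eq; lra).
  assert (Hle : phi (Rabs y + 3) <= phi y)
    by (apply phi_antitone; rewrite (Rabs_pos_eq (Rabs y + 3)); lra).
  rewrite (phi_tail _ Hfar) in Hle. unfold Rpower in Hle.
  pose proof (exp_pos ((s - 1) * ln (Rabs (Rabs y + 3)))). lra.
Qed.

Lemma phi_le_1 y : phi y <= 1.
Proof.
  destruct Hp as (_ & _ & _ & H & _). rewrite <- (H 0) by (rewrite Rabs_R0; lra).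
  apply phi_antitone. rewrite Rabs_R0. apply Rabs_pos.
Qed.

(* On [-4,4] phi stays above phi(4) = 4^(s-1) >= 4^(-1/2) = 1/2. *)
Lemma phi_ge_half y : Rabs y <= 4 -> 1/2 <= phi y.
Proof.
  intro Hy. assert (H : phi 4 <= phi y) by (apply phi_antitone; rewrite (Rabs_pos_eq 4); lra).
  rewrite (phi_tail 4), Rabs_pos_eq in H by (try rewrite Rabs_pos_eq; lra).
  assert (H2 : Rpower 4 (- / 2) <= Rpower 4 (s - 1)) by (apply Rle_Rpower; lra).
  rewrite Rpower_Ropp, Rpower_sqrt in H2 by lra.
  assert (E : sqrt 4 = 2) by (rewrite <- (sqrt_square 2) by lra; f_equal; lra).
  rewrite E in H2. lra.
Qed.

(* In the tail phi(y)^2 |y| = |y|^(2s-1), a nondecreasing function of |y|. *)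
Lemma phi_sq_weight_tail y : 2 < Rabs y -> phi y ^ 2 * Rabs y = Rpower (Rabs y) (2 * s - 1).
Proof.
  intro H. rewrite phi_tail by lra.
  replace (2 * s - 1) with ((s - 1) + (s - 1) + 1) by ring.
  rewrite !Rpower_plus, Rpower_1 by lra. ring.
Qed.

Lemma Rpower_ge_1 y e : 1 <= y -> 0 <= e -> 1 <= Rpower y e.
Proof. intros. rewrite <- (Rpower_O y) at 1 by lra. apply Rle_Rpower; lra. Qed.

Lemma phi_weight_quasi_monotone y z :
  Rabs y <= Rabs z -> phi y ^ 2 * Rabs y <= 8 * (phi z ^ 2 * Rabs z).
Proof.
  intro H. pose proof (phi_pos y). pose proof (phi_le_1 y). pose proof (phi_pos z).
  pose proof (Rabs_pos y).
  assert (Hy2 : phi y ^ 2 <= 1) by nra.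
  assert (Hy : phi y ^ 2 * Rabs y <= Rabs y) by nra.
  destruct (Rle_lt_dec (Rabs z) 4) as [Hz | Hz].
  - pose proof (phi_ge_half z Hz).
    assert (1/4 <= phi z ^ 2) by nra.
    assert (Rabs z <= 4 * (phi z ^ 2 * Rabs z)) by (pose proof (Rabs_pos z); nra).
    lra.
  - rewrite (phi_sq_weight_tail z) by lra.
    pose proof (Rpower_ge_1 (Rabs z) (2 * s - 1) ltac:(lra) ltac:(lra)).
    destruct (Rle_lt_dec (Rabs y) 4) as [Hy4 | Hy4]; [lra |].
    rewrite (phi_sq_weight_tail y) by lra.
    assert (Rpower (Rabs y) (2 * s - 1) <= Rpower (Rabs z) (2 * s - 1))
      by (apply Rle_Rpower_l; lra).
    pose proof (Rpower_ge_1 (Rabs y) (2 * s - 1) ltac:(lra) ltac:(lra)). lra.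
Qed.

End Profile.

Lemma Rabs_le_inv x a : Rabs x <= a -> - a <= x <= a.
Proof. unfold Rabs; destruct (Rcase_abs x); lra. Qed.

Lemma continuous_bounded_on f a b : a <= b -> (forall c, continuity_pt f c) ->
  exists B, 0 <= B /\ forall y, a <= y <= b -> Rabs (f y) <= B.
Proof.
  intros Hab Hc.
  destruct (continuity_ab_maj f a b Hab (fun c _ => Hc c)) as [ymax [Hmax _]].
  destruct (continuity_ab_min f a b Hab (fun c _ => Hc c)) as [ymin [Hmin _]].
  exists (Rmax (Rabs (f ymax)) (Rabs (f ymin))). split.
  - eapply Rle_trans; [apply Rabs_pos | apply Rmax_l].
  - intros y Hy. specialize (Hmax y Hy). specialize (Hmin y Hy).
    pose proof (Rmax_l (Rabs (f ymax)) (Rabs (f ymin))).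
    pose proof (Rmax_r (Rabs (f ymax)) (Rabs (f ymin))).
    pose proof (Rle_abs (f ymax)). pose proof (Rle_abs (- f ymin)).
    rewrite Rabs_Ropp in *. apply Rabs_le. lra.
Qed.

Lemma MVT_unordered f f' a b : (forall c, derivable_pt_lim f c (f' c)) ->
  exists c, Rmin a b <= c <= Rmax a b /\ f b - f a = f' c * (b - a).
Proof.
  intros Hd. destruct (Rtotal_order a b) as [H | [H | H]].
  - destruct (MVT_cor2 f f' a b H (fun c _ => Hd c)) as [c [E Hc]].
    exists c. rewrite Rmin_left, Rmax_right by lra. split; [lra | exact E].
  - subst. exists b. rewrite Rmin_left, Rmax_left by lra. split; [lra | ring].
  - destruct (MVT_cor2 f f' b a H (fun c _ => Hd c)) as [c [E Hc]].
    exists c. rewrite Rmin_right, Rmax_left by lra. split; [lra |].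
    replace (f b - f a) with (- (f a - f b)) by ring. rewrite E. ring.
Qed.

Lemma Rpower_shift y e : 0 < y -> Rpower y (e - 1) * y = Rpower y e.
Proof.
  intro. rewrite <- (Rpower_1 y) at 2 by lra. rewrite <- Rpower_plus. f_equal. ring.
Qed.

Lemma Rpower_pos y e : 0 < Rpower y e.
Proof. apply exp_pos. Qed.

Lemma between_abs a b c R : Rmin a b <= c <= Rmax a b ->
  Rabs a <= R -> Rabs b <= R -> Rabs c <= R.
Proof.
  intros [H1 H2] Ha Hb. apply Rabs_le_inv in Ha. apply Rabs_le_inv in Hb.
  apply Rabs_le. unfold Rmin, Rmax in *. destruct (Rle_dec a b); lra.
Qed.

Section Symbol.
Variables (s : R) (phi : R -> R) (D : nat -> R -> R).
Hypothesis Hs : 1/2 <= s < 1.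
Hypothesis Hp : profile s phi.
Hypothesis HD0 : D O = phi.
Hypothesis HD : forall j x, derivable_pt_lim (D j) x (D (S j) x).

Lemma phi_deriv y : derivable_pt_lim phi y (D 1%nat y).
Proof. rewrite <- HD0. apply HD. Qed.

Lemma tower_continuous j c : continuity_pt (D j) c.
Proof. apply derivable_continuous_pt. exists (D (S j) c). apply HD. Qed.

Lemma tower_parity j y : D j (- y) = (-1) ^ j * D j y.
Proof.
  revert y. induction j as [| j IH]; intro y.
  - rewrite HD0. simpl. rewrite (phi_even s phi Hp). ring.
  - assert (Hd : derivable_pt_lim (fun t => (-1) ^ j * mirr_fct (D j) t) (- y)
                   ((-1) ^ j * - D (S j) y)).
    { apply derivable_pt_lim_scal, derivable_pt_lim_mirr_fwd.
      rewrite !Ropp_involutive. apply HD. }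
    assert (Hext : forall t, (-1) ^ j * mirr_fct (D j) t = D j t).
    { intro t. unfold mirr_fct. rewrite IH. replace (- - t) with t by ring.
      rewrite <- Rmult_assoc, <- pow_add.
      replace (j + j)%nat with (2 * j)%nat by lia. rewrite pow_1_even. ring. }
    apply derivable_pt_lim_ext with (g := D j) in Hd; [| exact Hext].
    rewrite (uniqueness_limite _ _ _ _ (HD j (- y)) Hd). simpl. ring.
Qed.

Lemma tower_abs_even j y : Rabs (D j (- y)) = Rabs (D j y).
Proof.
  rewrite tower_parity, Rabs_mult, pow_1_abs. ring.
Qed.

Lemma tower1_tail y : 2 < y -> D 1%nat y = (s - 1) * Rpower y (s - 1 - 1).
Proof.
  intro Hy. apply (uniqueness_limite phi y); [apply phi_deriv |].
  apply (derivable_pt_lim_locally_ext (fun t => Rpower t (s - 1)) phi y 2 (y + 1)); [lra | |].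
  - intros t Ht. rewrite (phi_tail s phi Hp), Rabs_pos_eq by (try rewrite Rabs_pos_eq; lra).
    reflexivity.
  - apply derivable_pt_lim_power. lra.
Qed.

Lemma tower2_tail y : 2 < y ->
  D 2%nat y = (s - 1) * ((s - 1 - 1) * Rpower y (s - 1 - 1 - 1)).
Proof.
  intro Hy. apply (uniqueness_limite (D 1%nat) y); [apply HD |].
  apply (derivable_pt_lim_locally_ext (fun t => (s - 1) * Rpower t (s - 1 - 1)) _ y 2 (y + 1));
    [lra | intros t Ht; symmetry; apply tower1_tail; lra |].
  apply derivable_pt_lim_scal, derivable_pt_lim_power. lra.
Qed.

Lemma tower1_tail_bound y : 2 < y -> Rabs (D 1%nat y) * y ^ 1 <= 1 * phi y.
Proof.
  intro Hy. rewrite tower1_tail, (phi_tail s phi Hp), (Rabs_pos_eq y)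
    by (try rewrite Rabs_pos_eq; lra).
  rewrite Rabs_mult, (Rabs_pos_eq (Rpower _ _)) by (left; apply Rpower_pos).
  rewrite pow_1, Rmult_assoc, Rpower_shift, Rabs_left1 by lra.
  pose proof (Rpower_pos y (s - 1)). nra.
Qed.

Lemma tower2_tail_bound y : 2 < y -> Rabs (D 2%nat y) * y ^ 2 <= 2 * phi y.
Proof.
  intro Hy. rewrite tower2_tail, (phi_tail s phi Hp), (Rabs_pos_eq y)
    by (try rewrite Rabs_pos_eq; lra).
  replace ((s - 1) * ((s - 1 - 1) * Rpower y (s - 1 - 1 - 1)))
    with (((1 - s) * (2 - s)) * Rpower y (s - 1 - 1 - 1)) by ring.
  rewrite Rabs_mult, !Rabs_pos_eq by (try apply Rmult_le_pos; try (left; apply Rpower_pos); lra).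
  assert (E : Rpower y (s - 1 - 1 - 1) * y ^ 2 = Rpower y (s - 1)).
  { replace (Rpower y (s - 1 - 1 - 1) * y ^ 2) with (Rpower y (s - 1 - 1 - 1) * y * y) by ring.
    rewrite !Rpower_shift by lra. reflexivity. }
  rewrite Rmult_assoc, E.
  pose proof (Rpower_pos y (s - 1)). assert ((1 - s) * (2 - s) <= 2) by nra. nra.
Qed.

(* A symbol-type bound |D_j y| |y|^j <~ phi y holds everywhere once it holds
   in the right tail: on [-4,4] use continuity and phi >= 1/2, on the left
   tail use the parity of D_j. *)
Lemma symbol_bound j c : 0 <= c -> (forall y, 2 < y -> Rabs (D j y) * y ^ j <= c * phi y) ->
  exists C, 0 <= C /\ forall y, Rabs (D j y) * Rabs y ^ j <= C * phi y.
Proof.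
  intros Hc Htail.
  destruct (continuous_bounded_on (D j) (-4) 4 ltac:(lra) (tower_continuous j)) as [B [HB0 HB]].
  exists (2 * B * 4 ^ j + c). split; [pose proof (pow_le 4 j); nra |].
  intro y. pose proof (phi_pos s phi Hp y). pose proof (Rabs_pos y).
  assert (H4j : 0 <= 4 ^ j) by (apply pow_le; lra).
  destruct (Rle_lt_dec (Rabs y) 4) as [Hy | Hy].
  - pose proof (HB y (Rabs_le_inv _ _ Hy)). pose proof (phi_ge_half s phi Hs Hp y Hy).
    assert (Rabs (D j y) * Rabs y ^ j <= B * 4 ^ j)
      by (apply Rmult_le_compat; try apply Rabs_pos; try apply pow_le; try apply pow_incr; lra).
    assert (0 <= B * 4 ^ j) by (apply Rmult_le_pos; lra).
    assert (B * 4 ^ j <= 2 * (B * 4 ^ j) * phi y) by nra.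
    assert (0 <= c * phi y) by nra. nra.
  - assert (Rabs (D j y) * Rabs y ^ j <= c * phi y).
    { unfold Rabs at 2. destruct (Rcase_abs y).
      - rewrite <- (Ropp_involutive y) at 1. rewrite tower_abs_even, <- (phi_even s phi Hp y).
        apply Htail. unfold Rabs in Hy. destruct (Rcase_abs y); lra.
      - apply Htail. unfold Rabs in Hy. destruct (Rcase_abs y); lra. }
    assert (0 <= 2 * B * 4 ^ j * phi y) by (apply Rmult_le_pos; nra). nra.
Qed.

End Symbol.

Lemma derivable_pt_lim_eq_value f x l l' :
  derivable_pt_lim f x l -> l = l' -> derivable_pt_lim f x l'.
Proof. intros H <-. exact H. Qed.

Lemma shift_deriv f f' a t : (forall x, derivable_pt_lim f x (f' x)) ->
  derivable_pt_lim (fun x => f (x + a)) t (f' (t + a)).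
Proof.
  intro Hf.
  assert (H1 : derivable_pt_lim (fun x => x + a) t 1).
  { eapply derivable_pt_lim_eq_value.
    - apply derivable_pt_lim_plus; [apply derivable_pt_lim_id | apply derivable_pt_lim_const].
    - ring. }
  rewrite <- (Rmult_1_r (f' (t + a))).
  apply (derivable_pt_lim_comp (fun x => x + a) f t 1 (f' (t + a)) H1 (Hf _)).
Qed.

Lemma Rabs_sum4 a b c d : Rabs (a + b + c + d) <= Rabs a + Rabs b + Rabs c + Rabs d.
Proof.
  pose proof (Rabs_triang (a + b + c) d). pose proof (Rabs_triang (a + b) c).
  pose proof (Rabs_triang a b). lra.
Qed.

Lemma Rabs_sum6 a b c d e g : Rabs (a + b + c + d + e + g) <=
  Rabs (a + b) + Rabs c + Rabs d + Rabs e + Rabs g.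
Proof.
  repeat (eapply Rle_trans; [apply Rabs_triang | apply Rplus_le_compat_r]). apply Rle_refl.
Qed.

Section Cubic.
Variables (s : R) (phi : R -> R) (D : nat -> R -> R).
Hypothesis Hs : 1/2 <= s < 1.
Hypothesis Hp : profile s phi.
Hypothesis HD0 : D O = phi.
Hypothesis HD : forall j x, derivable_pt_lim (D j) x (D (S j) x).

Definition cubic1 (t : R) : R := 2 * phi t * D 1%nat t * t ^ 3 + 3 * phi t ^ 2 * t ^ 2.
Definition cubic2 (t : R) : R :=
  2 * D 1%nat t ^ 2 * t ^ 3 + 2 * phi t * D 2%nat t * t ^ 3
  + 12 * phi t * D 1%nat t * t ^ 2 + 6 * phi t ^ 2 * t.

Lemma cubic_deriv t : derivable_pt_lim (cubic_of phi) t (cubic1 t).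
Proof.
  apply (derivable_pt_lim_ext (fun t => phi t * phi t * (t * t * t)));
    [intro; unfold cubic_of; ring |].
  eapply derivable_pt_lim_eq_value.
  - repeat apply derivable_pt_lim_mult;
      try apply (phi_deriv phi D HD0 HD); apply derivable_pt_lim_id.
  - unfold cubic1. ring.
Qed.

Lemma cubic1_deriv t : derivable_pt_lim cubic1 t (cubic2 t).
Proof.
  apply (derivable_pt_lim_ext (fun t => 2 * phi t * D 1%nat t * (t * t * t)
                                        + 3 * (phi t * phi t) * (t * t)));
    [intro; unfold cubic1; ring |].
  eapply derivable_pt_lim_eq_value.
  - apply derivable_pt_lim_plus; repeat apply derivable_pt_lim_mult;
      try apply derivable_pt_lim_const; try apply (phi_deriv phi D HD0 HD); try apply HD;
      apply derivable_pt_lim_id.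
  - unfold cubic2. ring.
Qed.

Lemma phi1_symbol : exists c1, 0 <= c1 /\ forall y, Rabs (D 1%nat y) * Rabs y <= c1 * phi y.
Proof.
  destruct (symbol_bound s phi D Hs Hp HD0 HD 1 1 ltac:(lra)
              (tower1_tail_bound s phi D Hs Hp HD0 HD)) as [c1 [Hc1 H]].
  exists c1. split; [exact Hc1 |]. intro y. rewrite <- (pow_1 (Rabs y)). apply H.
Qed.

Lemma phi2_symbol : exists c2, 0 <= c2 /\ forall y, Rabs (D 2%nat y) * y ^ 2 <= c2 * phi y.
Proof.
  destruct (symbol_bound s phi D Hs Hp HD0 HD 2 2 ltac:(lra)
              (tower2_tail_bound s phi D Hs Hp HD0 HD)) as [c2 [Hc2 H]].
  exists c2. split; [exact Hc2 |]. intro y. rewrite <- pow2_abs. apply H.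
Qed.

Lemma cubic1_bound : exists C, 0 <= C /\ forall t, Rabs (cubic1 t) <= C * (phi t ^ 2 * t ^ 2).
Proof.
  destruct phi1_symbol as [c1 [Hc1 H1]].
  exists (2 * c1 + 3). split; [lra |]. intro t.
  pose proof (phi_pos s phi Hp t) as HP. specialize (H1 t).
  set (P := phi t) in *. set (d1 := Rabs (D 1%nat t)) in *. set (r := Rabs t) in *.
  assert (Hr : 0 <= r) by apply Rabs_pos. assert (Hd : 0 <= d1) by apply Rabs_pos.
  assert (Et : t ^ 2 = r * r) by (unfold r; rewrite <- pow2_abs; ring).
  assert (E : Rabs (cubic1 t) <= 2 * P * d1 * (r * r * r) + 3 * (P * P) * (r * r)).
  { unfold cubic1. eapply Rle_trans; [apply Rabs_triang |].
    rewrite !Rabs_mult, <- !RPow_abs, !(Rabs_pos_eq 2), !(Rabs_pos_eq 3), (Rabs_pos_eq (phi t))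
      by (try lra; left; exact HP).
    apply Req_le. fold P d1 r. ring. }
  rewrite Et.
  assert (2 * P * (r * r) * (d1 * r) <= 2 * P * (r * r) * (c1 * P))
    by (apply Rmult_le_compat_l; [| exact H1]; nra).
  nra.
Qed.

Lemma cubic2_bound : exists C, 0 <= C /\ forall t, Rabs (cubic2 t) <= C * (phi t ^ 2 * Rabs t).
Proof.
  destruct phi1_symbol as [c1 [Hc1 H1]]. destruct phi2_symbol as [c2 [Hc2 H2]].
  exists (2 * c1 * c1 + 2 * c2 + 12 * c1 + 6). split; [nra |]. intro t.
  pose proof (phi_pos s phi Hp t) as HP. specialize (H1 t). specialize (H2 t).
  set (P := phi t) in *. set (d1 := Rabs (D 1%nat t)) in *.
  set (d2 := Rabs (D 2%nat t)) in *. set (r := Rabs t) in *.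
  assert (Hr : 0 <= r) by apply Rabs_pos. assert (Hd1 : 0 <= d1) by apply Rabs_pos.
  assert (Hd2 : 0 <= d2) by apply Rabs_pos.
  assert (Et : t ^ 2 = r * r) by (unfold r; rewrite <- pow2_abs; ring).
  rewrite Et in H2.
  assert (E : Rabs (cubic2 t) <= 2 * (d1 * d1) * (r * r * r) + 2 * P * d2 * (r * r * r)
                                 + 12 * P * d1 * (r * r) + 6 * (P * P) * r).
  { unfold cubic2. eapply Rle_trans; [apply Rabs_sum4 |].
    rewrite !Rabs_mult, <- !RPow_abs, !(Rabs_pos_eq 2), !(Rabs_pos_eq 12), !(Rabs_pos_eq 6),
      !(Rabs_pos_eq (phi t)) by (try lra; left; exact HP).
    apply Req_le. fold P d1 d2 r. ring. }
  assert (A1 : d1 * d1 * (r * r * r) <= c1 * c1 * (P * P) * r).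
  { assert (d1 * r * (d1 * r) <= c1 * P * (c1 * P)) by (apply Rmult_le_compat; nra). nra. }
  assert (A2 : P * d2 * (r * r * r) <= c2 * (P * P) * r).
  { assert (P * r * (d2 * (r * r)) <= P * r * (c2 * P)) by (apply Rmult_le_compat_l; nra). nra. }
  assert (A3 : P * d1 * (r * r) <= c1 * (P * P) * r).
  { assert (P * r * (d1 * r) <= P * r * (c1 * P)) by (apply Rmult_le_compat_l; nra). nra. }
  nra.
Qed.

Lemma phi_weight_ball c R : Rabs c <= R -> phi c ^ 2 * Rabs c <= 8 * (phi R ^ 2 * R).
Proof.
  intro H. assert (0 <= R) by (pose proof (Rabs_pos c); lra).
  rewrite <- (Rabs_pos_eq R) at 2 by lra.
  apply (phi_weight_quasi_monotone s phi Hs Hp). rewrite (Rabs_pos_eq R); lra.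
Qed.

Lemma cubic_lipschitz : exists C, 0 <= C /\ forall u v R, Rabs u <= R -> Rabs v <= R ->
  Rabs (cubic_of phi u - cubic_of phi v) <= C * (phi R ^ 2 * R ^ 2) * Rabs (u - v).
Proof.
  destruct cubic1_bound as [C [HC HG]]. exists (8 * C). split; [lra |].
  intros u v R Hu Hv.
  destruct (MVT_unordered (cubic_of phi) cubic1 v u cubic_deriv) as [c [Hc E]].
  rewrite E, Rabs_mult. apply Rmult_le_compat_r; [apply Rabs_pos |].
  pose proof (between_abs v u c R Hc Hv Hu) as Hcr.
  pose proof (phi_weight_ball c R Hcr). pose proof (Rabs_pos c).
  assert (Ec : c ^ 2 = Rabs c * Rabs c) by (rewrite <- pow2_abs; ring).
  assert (phi c ^ 2 * Rabs c * Rabs c <= 8 * (phi R ^ 2 * R) * R)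
    by (apply Rmult_le_compat; try apply Rmult_le_pos; try apply pow2_ge_0; lra).
  eapply Rle_trans; [apply HG |]. rewrite Ec.
  replace (8 * C * (phi R ^ 2 * R ^ 2)) with (C * (8 * (phi R ^ 2 * R) * R)) by ring.
  apply Rmult_le_compat_l; [lra |]. lra.
Qed.

(* Second-difference bound for g on [-R,R]: the mean value theorem applied
   to x |-> g(x + a) - g(x), then to g'. *)
Lemma cubic_second_difference : exists C, 0 <= C /\ forall u v a R,
  Rabs u <= R -> Rabs v <= R -> Rabs (u + a) <= R -> Rabs (v + a) <= R ->
  Rabs (cubic_of phi (u + a) - cubic_of phi u - cubic_of phi (v + a) + cubic_of phi v)
    <= C * (phi R ^ 2 * R) * Rabs a * Rabs (u - v).
Proof.
  destruct cubic2_bound as [C [HC HG]]. exists (8 * C). split; [lra |].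
  intros u v a R Hu Hv Hua Hva.
  set (h := fun x => cubic_of phi (x + a) - cubic_of phi x).
  assert (Hh : forall x, derivable_pt_lim h x (cubic1 (x + a) - cubic1 x)).
  { intro x. apply derivable_pt_lim_minus; [apply (shift_deriv _ _ a x cubic_deriv) |].
    apply cubic_deriv. }
  destruct (MVT_unordered h (fun x => cubic1 (x + a) - cubic1 x) v u Hh) as [c [Hc E]].
  replace (cubic_of phi (u + a) - cubic_of phi u - cubic_of phi (v + a) + cubic_of phi v)
    with (h u - h v) by (unfold h; ring).
  rewrite E.
  pose proof (between_abs v u c R Hc Hv Hu) as Hcr.
  assert (Hca : Rabs (c + a) <= R).
  { apply (between_abs (v + a) (u + a)); auto. unfold Rmin, Rmax in *.
    destruct (Rle_dec v u), (Rle_dec (v + a) (u + a)); lra. }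
  destruct (MVT_unordered cubic1 cubic2 c (c + a) cubic1_deriv) as [c' [Hc' E']].
  rewrite E'. replace (c + a - c) with a by ring.
  pose proof (between_abs c (c + a) c' R Hc' Hcr Hca) as Hc'r.
  rewrite !Rabs_mult.
  pose proof (phi_weight_ball c' R Hc'r). specialize (HG c').
  assert (Rabs (cubic2 c') <= 8 * C * (phi R ^ 2 * R)) by nra.
  pose proof (Rabs_pos a). pose proof (Rabs_pos (u - v)).
  apply Rmult_le_compat_r; [lra |]. apply Rmult_le_compat_r; lra.
Qed.

End Cubic.

(* The Lipschitz and second-difference bounds are scale invariant: they pass
   from g = cubic_of phi to g_N = cubic_of m_N, m_N = phi(./N), with the same
   constants. *)
Section Rescale.
Variables (phi : R -> R) (N : R).
Hypothesis HN : 1 <= N.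

Lemma abs_div_N x : Rabs (x / N) = Rabs x / N.
Proof. unfold Rdiv. rewrite Rabs_mult, Rabs_inv, (Rabs_pos_eq N) by lra. reflexivity. Qed.

Lemma div_N_le x y : x <= y -> x / N <= y / N.
Proof. intro. unfold Rdiv. apply Rmult_le_compat_r; [left; apply Rinv_0_lt_compat |]; lra. Qed.

Lemma ball_div_N x R : Rabs x <= R -> Rabs (x / N) <= R / N.
Proof. intro. rewrite abs_div_N. apply div_N_le. exact H. Qed.

Lemma cubic_rescale x : cubic_of (mult phi N) x = N ^ 3 * cubic_of phi (x / N).
Proof. unfold cubic_of, mult. field. lra. Qed.

Lemma mult_lipschitz C : (forall u v R, Rabs u <= R -> Rabs v <= R ->
    Rabs (cubic_of phi u - cubic_of phi v) <= C * (phi R ^ 2 * R ^ 2) * Rabs (u - v)) ->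
  forall u v R, Rabs u <= R -> Rabs v <= R ->
  Rabs (cubic_of (mult phi N) u - cubic_of (mult phi N) v)
    <= C * (mult phi N R ^ 2 * R ^ 2) * Rabs (u - v).
Proof.
  intros HL u v R Hu Hv.
  specialize (HL _ _ _ (ball_div_N _ _ Hu) (ball_div_N _ _ Hv)).
  rewrite !cubic_rescale, <- Rmult_minus_distr_l, Rabs_mult, (Rabs_pos_eq (N ^ 3))
    by (apply pow_le; lra).
  replace (u / N - v / N) with ((u - v) / N) in HL by (field; lra).
  rewrite abs_div_N in HL.
  apply (Rmult_le_compat_l (N ^ 3)) in HL; [| apply pow_le; lra].
  eapply Rle_trans; [exact HL |]. unfold mult. apply Req_le. field. lra.
Qed.

Lemma mult_second_difference C : (forall u v a R,
    Rabs u <= R -> Rabs v <= R -> Rabs (u + a) <= R -> Rabs (v + a) <= R ->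
    Rabs (cubic_of phi (u + a) - cubic_of phi u - cubic_of phi (v + a) + cubic_of phi v)
      <= C * (phi R ^ 2 * R) * Rabs a * Rabs (u - v)) ->
  forall u v a R,
    Rabs u <= R -> Rabs v <= R -> Rabs (u + a) <= R -> Rabs (v + a) <= R ->
    Rabs (cubic_of (mult phi N) (u + a) - cubic_of (mult phi N) u
          - cubic_of (mult phi N) (v + a) + cubic_of (mult phi N) v)
      <= C * (mult phi N R ^ 2 * R) * Rabs a * Rabs (u - v).
Proof.
  intros HL u v a R Hu Hv Hua Hva.
  assert (Eu : (u + a) / N = u / N + a / N) by (field; lra).
  assert (Ev : (v + a) / N = v / N + a / N) by (field; lra).
  pose proof (ball_div_N _ _ Hua) as Hua'. pose proof (ball_div_N _ _ Hva) as Hva'.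
  rewrite Eu in Hua'. rewrite Ev in Hva'.
  specialize (HL _ _ _ _ (ball_div_N _ _ Hu) (ball_div_N _ _ Hv) Hua' Hva').
  rewrite !cubic_rescale, Eu, Ev.
  replace (N ^ 3 * cubic_of phi (u / N + a / N) - N ^ 3 * cubic_of phi (u / N)
           - N ^ 3 * cubic_of phi (v / N + a / N) + N ^ 3 * cubic_of phi (v / N))
    with (N ^ 3 * (cubic_of phi (u / N + a / N) - cubic_of phi (u / N)
                   - cubic_of phi (v / N + a / N) + cubic_of phi (v / N))) by ring.
  rewrite Rabs_mult, (Rabs_pos_eq (N ^ 3)) by (apply pow_le; lra).
  replace (u / N - v / N) with ((u - v) / N) in HL by (field; lra).
  rewrite !abs_div_N in HL.
  apply (Rmult_le_compat_l (N ^ 3)) in HL; [| apply pow_le; lra].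
  eapply Rle_trans; [exact HL |]. unfold mult. apply Req_le. field. lra.
Qed.

End Rescale.

Section RescaledProfile.
Variables (s : R) (phi : R -> R) (N : R).
Hypothesis Hp : profile s phi.
Hypothesis HN : 1 <= N.

Lemma mult_pos x : 0 < mult phi N x.
Proof. apply (phi_pos s phi Hp). Qed.

Lemma mult_le_1 x : mult phi N x <= 1.
Proof. apply (phi_le_1 s phi Hp). Qed.

Lemma mult_low x : Rabs x <= N -> mult phi N x = 1.
Proof.
  intro H. unfold mult. destruct Hp as (_ & _ & _ & H1 & _). apply H1.
  rewrite (abs_div_N N HN). replace 1 with (N / N) by (field; lra). apply (div_N_le N HN), H.
Qed.

Lemma mult_abs x : mult phi N (Rabs x) = mult phi N x.
Proof.
  unfold mult. rewrite <- (phi_abs s phi Hp (x / N)), <- (phi_abs s phi Hp (Rabs x / N)).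
  rewrite !(abs_div_N N HN), Rabs_Rabsolu. reflexivity.
Qed.

Lemma mult_antitone x y : Rabs x <= Rabs y -> mult phi N y <= mult phi N x.
Proof.
  intro H. apply (phi_antitone s phi Hp). rewrite !(abs_div_N N HN). apply (div_N_le N HN), H.
Qed.

Lemma mult_weight_quasi_monotone (Hs : 1/2 <= s < 1) x z : Rabs x <= Rabs z ->
  mult phi N x ^ 2 * Rabs x <= 8 * (mult phi N z ^ 2 * Rabs z).
Proof.
  intro H.
  assert (H1 : Rabs (x / N) <= Rabs (z / N))
    by (rewrite !(abs_div_N N HN); apply (div_N_le N HN), H).
  pose proof (phi_weight_quasi_monotone s phi Hs Hp _ _ H1) as H2.
  rewrite !(abs_div_N N HN) in H2. unfold mult.
  apply (Rmult_le_reg_r (/ N)); [apply Rinv_0_lt_compat; lra |].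
  unfold Rdiv in H2. lra.
Qed.

End RescaledProfile.

Ltac nonneg := repeat (first [apply pow2_ge_0 | apply Rmult_le_pos | apply Rplus_le_le_0_compat]);
  try first [lra | apply Rabs_pos].

Lemma not_ll C0 A B : 0 < C0 -> ~ ll C0 A B -> B < C0 * A.
Proof.
  intros H0 H. unfold ll in H. apply Rnot_le_lt in H.
  replace B with (C0 * (B / C0)) by (field; lra). apply Rmult_lt_compat_l; lra.
Qed.

Lemma ll_mult C0 A B : 0 < C0 -> ll C0 A B -> C0 * A <= B.
Proof.
  intros H0 H. unfold ll in H.
  replace B with (C0 * (B / C0)) by (field; lra). apply Rmult_le_compat_l; lra.
Qed.

(* Six-frequency estimates for an abstract multiplier m with the properties
   established above (rescaled profiles being the instance of interest);
   C1, C2 are the Lipschitz and second-difference constants. *)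
Section SixFrequencies.
Variables (m : R -> R) (N K C0 C1 C2 : R).
Hypothesis HK : 1 <= K.
Hypothesis HC0 : 12 * K ^ 2 <= C0.
Hypothesis HC1 : 0 <= C1.
Hypothesis HC2 : 0 <= C2.
Hypothesis Hm_pos : forall x, 0 < m x.
Hypothesis Hm_le_1 : forall x, m x <= 1.
Hypothesis Hm_low : forall x, Rabs x <= N -> m x = 1.
Hypothesis Hm_abs : forall x, m (Rabs x) = m x.
Hypothesis Hm_antitone : forall x y, Rabs x <= Rabs y -> m y <= m x.
Hypothesis Hm_weight : forall x z, Rabs x <= Rabs z -> m x ^ 2 * Rabs x <= 8 * (m z ^ 2 * Rabs z).
Hypothesis Hm_lipschitz : forall u v R, Rabs u <= R -> Rabs v <= R ->
  Rabs (cubic_of m u - cubic_of m v) <= C1 * (m R ^ 2 * R ^ 2) * Rabs (u - v).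
Hypothesis Hm_second_difference : forall u v a R,
  Rabs u <= R -> Rabs v <= R -> Rabs (u + a) <= R -> Rabs (v + a) <= R ->
  Rabs (cubic_of m (u + a) - cubic_of m u - cubic_of m (v + a) + cubic_of m v)
    <= C2 * (m R ^ 2 * R) * Rabs a * Rabs (u - v).

Local Notation f := (cubic_of m).

Lemma C0_ge_12 : 12 <= C0.
Proof. nra. Qed.

Lemma cubic_odd x : f (- x) = - f x.
Proof. unfold cubic_of. rewrite <- (Hm_abs (- x)), Rabs_Ropp, Hm_abs. ring. Qed.

Lemma cubic_size x z : Rabs x <= Rabs z -> Rabs (f x) <= 8 * m z ^ 2 * Rabs z * x ^ 2.
Proof.
  intro H. unfold cubic_of.
  rewrite Rabs_mult, (Rabs_pos_eq (m x ^ 2)), <- (RPow_abs x 3), <- (pow2_abs x)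
    by apply pow2_ge_0.
  pose proof (Hm_weight x z H). pose proof (Rabs_pos x).
  assert (m x ^ 2 * Rabs x * (Rabs x * Rabs x) <= 8 * (m z ^ 2 * Rabs z) * (Rabs x * Rabs x))
    by (apply Rmult_le_compat_r; nra).
  nra.
Qed.

Lemma pair_cancellation x y : Rabs y <= Rabs x ->
  Rabs (f x + f y) <= C1 * (m x ^ 2 * Rabs x ^ 2) * Rabs (x + y).
Proof.
  intro H.
  replace (f x + f y) with (f x - f (- y)) by (rewrite cubic_odd; ring).
  replace (x + y) with (x - - y) by ring.
  rewrite <- (Hm_abs x). apply Hm_lipschitz; [lra | rewrite Rabs_Ropp; lra].
Qed.

(* On the ball of radius 2R the weight can be evaluated at R, since m is
   nonincreasing; this puts the two cancellation bounds in a uniform form. *)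
Lemma weight_double R : 0 <= R -> m (2 * R) ^ 2 <= m R ^ 2.
Proof.
  intro HR. assert (m (2 * R) <= m R) by (apply Hm_antitone; rewrite !Rabs_pos_eq; lra).
  pose proof (Hm_pos (2 * R)). nra.
Qed.

Lemma lipschitz_double u v R : Rabs u <= 2 * R -> Rabs v <= 2 * R ->
  Rabs (f u - f v) <= 4 * C1 * m R ^ 2 * R ^ 2 * Rabs (u - v).
Proof.
  intros Hu Hv. assert (HR : 0 <= R) by (pose proof (Rabs_pos u); lra).
  eapply Rle_trans; [apply (Hm_lipschitz u v (2 * R) Hu Hv) |].
  replace (C1 * (m (2 * R) ^ 2 * (2 * R) ^ 2) * Rabs (u - v))
    with ((4 * C1 * R ^ 2 * Rabs (u - v)) * m (2 * R) ^ 2) by ring.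
  replace (4 * C1 * m R ^ 2 * R ^ 2 * Rabs (u - v))
    with ((4 * C1 * R ^ 2 * Rabs (u - v)) * m R ^ 2) by ring.
  apply Rmult_le_compat_l; [nonneg | apply weight_double, HR].
Qed.

Lemma second_difference_double u v a R :
  Rabs u <= 2 * R -> Rabs v <= 2 * R -> Rabs (u + a) <= 2 * R -> Rabs (v + a) <= 2 * R ->
  Rabs (f (u + a) - f u - f (v + a) + f v) <= 2 * C2 * m R ^ 2 * R * Rabs a * Rabs (u - v).
Proof.
  intros Hu Hv Hua Hva. assert (HR : 0 <= R) by (pose proof (Rabs_pos u); lra).
  eapply Rle_trans; [apply (Hm_second_difference u v a (2 * R) Hu Hv Hua Hva) |].
  replace (C2 * (m (2 * R) ^ 2 * (2 * R)) * Rabs a * Rabs (u - v))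
    with ((2 * C2 * R * Rabs a * Rabs (u - v)) * m (2 * R) ^ 2) by ring.
  replace (2 * C2 * m R ^ 2 * R * Rabs a * Rabs (u - v))
    with ((2 * C2 * R * Rabs a * Rabs (u - v)) * m R ^ 2) by ring.
  apply Rmult_le_compat_l; [nonneg | apply weight_double, HR].
Qed.

(* Four frequencies of size <= R with sum t: by oddness,
     f x + f y + f z + f w = -[f(z+a) - f z - f(x) + f(-y)] - [f(-w) - f(z+a)]
   with a = x + y, a second difference plus a first difference; hence
   |f x + f y + f z + f w| <~ m(R)^2 R |x + y| (|x + w| + |t|) + m(R)^2 R^2 |t|. *)
Lemma four_term_cancellation x y z w R :
  Rabs x <= R -> Rabs y <= R -> Rabs z <= R -> Rabs w <= R -> Rabs (x + y + z + w) <= R ->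
  Rabs (f x + f y + f z + f w) <=
    2 * C2 * m R ^ 2 * R * Rabs (x + y) * (Rabs (x + w) + Rabs (x + y + z + w))
    + 4 * C1 * m R ^ 2 * R ^ 2 * Rabs (x + y + z + w).
Proof.
  intros Hx Hy Hz Hw Ht.
  set (t := x + y + z + w) in *. set (a := x + y).
  assert (HR : 0 <= R) by (pose proof (Rabs_pos x); lra).
  assert (Hza : Rabs (z + a) <= 2 * R).
  { replace (z + a) with (t - w) by (unfold t, a; ring).
    eapply Rle_trans; [apply Rabs_triang |]. rewrite Rabs_Ropp. lra. }
  assert (E : f x + f y + f z + f w =
     - (f (z + a) - f z - f (- y + a) + f (- y)) - (f (- w) - f (z + a))).
  { replace (- y + a) with x by (unfold a; ring). rewrite !cubic_odd. ring. }
  assert (Second : Rabs (f (z + a) - f z - f (- y + a) + f (- y)) <=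
                   2 * C2 * m R ^ 2 * R * Rabs a * Rabs (z - - y)).
  { apply second_difference_double; try rewrite Rabs_Ropp; try lra.
    replace (- y + a) with x by (unfold a; ring). lra. }
  assert (First : Rabs (f (- w) - f (z + a)) <= 4 * C1 * m R ^ 2 * R ^ 2 * Rabs t).
  { replace (Rabs t) with (Rabs (- w - (z + a)))
      by (replace (- w - (z + a)) with (- t) by (unfold t, a; ring); apply Rabs_Ropp).
    apply lipschitz_double; [rewrite Rabs_Ropp |]; lra. }
  assert (Hzy : Rabs (z - - y) <= Rabs (x + w) + Rabs t).
  { replace (z - - y) with (t - (x + w)) by (unfold t; ring).
    eapply Rle_trans; [apply Rabs_triang |]. rewrite Rabs_Ropp. lra. }
  assert (2 * C2 * m R ^ 2 * R * Rabs a * Rabs (z - - y) <=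
          2 * C2 * m R ^ 2 * R * Rabs a * (Rabs (x + w) + Rabs t))
    by (apply Rmult_le_compat_l; [nonneg | exact Hzy]).
  rewrite E. unfold Rminus at 1. eapply Rle_trans; [apply Rabs_triang |].
  rewrite !Rabs_Ropp. lra.
Qed.

Definition C_four : R := 4 * C0 * C2 + 8 * C2 + 8 * C1.

Lemma four_term_resonant x y z w e :
  Rabs y <= Rabs x -> Rabs z <= Rabs x -> Rabs w <= Rabs x ->
  Rabs (x + y + z + w) <= 2 * e -> 2 * e < Rabs x -> Rabs x / 2 <= Rabs (x + y) ->
  Rabs (x + y) * Rabs (x + z) * Rabs (x + w) <= C0 * e * Rabs x ^ 2 ->
  Rabs (f x + f y + f z + f w) <= C_four * (m x ^ 2 * Rabs x ^ 2 * e).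
Proof.
  intros Hy Hz Hw Ht He Hbig Hprod.
  pose proof C0_ge_12. pose proof (Rabs_pos x). pose proof (Rabs_pos (x + z)).
  pose proof (Rabs_pos (x + w)). pose proof (Rabs_pos (x + y + z + w)).
  assert (Hx : 0 < Rabs x) by lra.
  assert (Hzw : Rabs (x + z) * Rabs (x + w) <= 2 * C0 * e * Rabs x).
  { apply (Rmult_le_reg_l (Rabs x / 2)); [lra |].
    assert (Rabs x / 2 * (Rabs (x + z) * Rabs (x + w))
            <= Rabs (x + y) * (Rabs (x + z) * Rabs (x + w)))
      by (apply Rmult_le_compat_r; nonneg).
    nra. }
  assert (Hxz : Rabs (x + z) <= 2 * Rabs x) by (pose proof (Rabs_triang x z); lra).
  pose proof (four_term_cancellation x z y w (Rabs x) ltac:(lra) Hz Hy Hw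
    ltac:(replace (x + z + y + w) with (x + y + z + w) by ring; lra)) as Q.
  replace (x + z + y + w) with (x + y + z + w) in Q by ring.
  replace (f x + f z + f y + f w) with (f x + f y + f z + f w) in Q by ring.
  rewrite Hm_abs in Q.
  set (mu := m x ^ 2) in *. set (r := Rabs x) in *. set (tt := Rabs (x + y + z + w)) in *.
  assert (Hmu : 0 <= mu) by apply pow2_ge_0.
  assert (A : 2 * C2 * mu * r * (Rabs (x + z) * Rabs (x + w))
              <= 2 * C2 * mu * r * (2 * C0 * e * r))
    by (apply Rmult_le_compat_l; [nonneg | exact Hzw]).
  assert (B : Rabs (x + z) * tt <= (2 * r) * (2 * e)) by (apply Rmult_le_compat; lra).
  assert (B' : 2 * C2 * mu * r * (Rabs (x + z) * tt) <= 2 * C2 * mu * r * ((2 * r) * (2 * e)))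
    by (apply Rmult_le_compat_l; [nonneg | exact B]).
  assert (Cc : 4 * C1 * mu * r ^ 2 * tt <= 4 * C1 * mu * r ^ 2 * (2 * e))
    by (apply Rmult_le_compat_l; [nonneg | exact Ht]).
  unfold C_four. lra.
Qed.

(* x^3 + y^3 = (x + y)(x^2 - xy + y^2), and the quadratic factor is >= x^2/2. *)
Lemma sum_cubes_lower x y : Rabs (x + y) * Rabs x ^ 2 <= 2 * Rabs (x ^ 3 + y ^ 3).
Proof.
  replace (x ^ 3 + y ^ 3) with ((x + y) * (x ^ 2 - x * y + y ^ 2)) by ring.
  rewrite Rabs_mult, (Rabs_pos_eq (x ^ 2 - x * y + y ^ 2)) by nra.
  rewrite pow2_abs. pose proof (Rabs_pos (x + y)).
  assert (x ^ 2 <= 2 * (x ^ 2 - x * y + y ^ 2)) by nra. nra.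
Qed.

Lemma cubic_low x : Rabs x <= N -> f x = x ^ 3.
Proof. intro H. unfold cubic_of. rewrite Hm_low by exact H. ring. Qed.

Lemma separated_scales a1 a3 : 0 <= a1 -> 0 <= a3 -> C0 * a3 <= K * a1 ->
  12 * (C0 * a3 ^ 2) <= a1 ^ 2.
Proof.
  intros Ha1 Ha3 H. pose proof C0_ge_12.
  assert ((C0 * a3) * (C0 * a3) <= (K * a1) * (K * a1)) by (apply Rmult_le_compat; nonneg).
  assert (12 * K ^ 2 * a1 ^ 2 <= C0 * a1 ^ 2) by (apply Rmult_le_compat_r; nonneg).
  apply (Rmult_le_reg_l C0); [lra | nra].
Qed.

Section Ordered.
Variables X1 X2 X3 X4 X5 X6 : R.
Hypothesis O12 : Rabs X2 <= Rabs X1.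
Hypothesis O23 : Rabs X3 <= Rabs X2.
Hypothesis O34 : Rabs X4 <= Rabs X3.
Hypothesis O45 : Rabs X5 <= Rabs X4.
Hypothesis O56 : Rabs X6 <= Rabs X5.
Hypothesis Hsum : X1 + X2 + X3 + X4 + X5 + X6 = 0.

Local Notation M6 := (f X1 + f X2 + f X3 + f X4 + f X5 + f X6).

(* Bound (1) off Omega_3: either |xi_1| ~ |xi_3| and every term is
   O(m^2 |xi_1| |xi_3|^2), or the top pair nearly cancels. *)
Lemma bound_off_Omega3 :
  ~ (ll C0 (Rabs X3) (Rabs X1) /\ ll C0 (Rabs X3 ^ 2) (Rabs (X1 + X2) * Rabs X1)) ->
  Rabs M6 <= (48 * C0 ^ 2 + C1 * C0 + 32) * (m X1 ^ 2 * Rabs X1 * Rabs X3 ^ 2).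
Proof.
  intro Hc. pose proof C0_ge_12.
  set (a1 := Rabs X1) in *. set (a3 := Rabs X3) in *. set (mu := m X1 ^ 2).
  assert (Hmu : 0 <= mu) by apply pow2_ge_0.
  assert (Ha3 : 0 <= a3) by apply Rabs_pos.
  assert (P0 : 0 <= mu * a1 * a3 ^ 2) by nonneg.
  assert (Small : forall x, Rabs x <= a3 -> Rabs (f x) <= 8 * mu * a1 * a3 ^ 2).
  { intros x Hx. eapply Rle_trans; [apply (cubic_size x X1); fold a1; lra |].
    rewrite <- (pow2_abs x). pose proof (Rabs_pos x).
    apply Rmult_le_compat_l; [nonneg | nra]. }
  pose proof (Small X3 (Rle_refl _)). pose proof (Small X4 ltac:(lra)).
  pose proof (Small X5 ltac:(lra)). pose proof (Small X6 ltac:(lra)).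
  pose proof (Rabs_sum6 (f X1) (f X2) (f X3) (f X4) (f X5) (f X6)).
  apply not_and_or in Hc. destruct Hc as [Hc | Hc]; apply not_ll in Hc; try lra.
  -
    assert (Big : forall x, Rabs x <= a1 -> Rabs (f x) <= 8 * mu * a1 * (C0 ^ 2 * a3 ^ 2)).
    { intros x Hx. eapply Rle_trans; [apply (cubic_size x X1); exact Hx |].
      fold a1. rewrite <- (pow2_abs x). pose proof (Rabs_pos x).
      apply Rmult_le_compat_l; [nonneg |].
      assert (Rabs x <= C0 * a3) by lra. nra. }
    pose proof (Big X1 (Rle_refl _)). pose proof (Big X2 ltac:(unfold a1, a3 in *; lra)).
    pose proof (Big X3 ltac:(unfold a1, a3 in *; lra)).
    pose proof (Big X4 ltac:(unfold a1, a3 in *; lra)).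
    pose proof (Big X5 ltac:(unfold a1, a3 in *; lra)).
    pose proof (Big X6 ltac:(unfold a1, a3 in *; lra)).
    pose proof (Rabs_triang (f X1) (f X2)).
    assert (0 <= C1 * C0 * (mu * a1 * a3 ^ 2)) by nonneg.
    lra.
  -
    assert (L : Rabs (f X1 + f X2) <= C1 * (mu * a1 ^ 2) * Rabs (X1 + X2))
      by (apply pair_cancellation; exact O12).
    assert (C1 * (mu * a1 ^ 2) * Rabs (X1 + X2) <= C1 * C0 * (mu * a1 * a3 ^ 2)).
    { replace (C1 * (mu * a1 ^ 2) * Rabs (X1 + X2)) with ((C1 * mu * a1) * (Rabs (X1 + X2) * a1))
        by ring.
      replace (C1 * C0 * (mu * a1 * a3 ^ 2)) with ((C1 * mu * a1) * (C0 * a3 ^ 2)) by ring.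
      apply Rmult_le_compat_l; [nonneg | lra]. }
    assert (0 <= C0 ^ 2 * (mu * a1 * a3 ^ 2)) by nonneg.
    lra.
Qed.

(* Factoring xi_3^3 + xi_4^3 and using xi_3 + xi_4 = -(xi_1 + xi_2) - xi_5 - xi_6:
   the low cube sum is O(|xi_3|^2 (|xi_1 + xi_2| + |xi_5|)). *)
Lemma low_cubes_upper :
  Rabs (X3 ^ 3 + X4 ^ 3 + X5 ^ 3 + X6 ^ 3)
    <= 3 * Rabs X3 ^ 2 * Rabs (X1 + X2) + 8 * Rabs X3 ^ 2 * Rabs X5.
Proof.
  pose proof (Rabs_pos X3). pose proof (Rabs_pos X4). pose proof (Rabs_pos X5).
  pose proof (Rabs_pos X6).
  assert (Q0 : 0 <= X3 ^ 2 - X3 * X4 + X4 ^ 2) by nra.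
  assert (Q1 : X3 ^ 2 - X3 * X4 + X4 ^ 2 <= 3 * Rabs X3 ^ 2).
  { assert (- (X3 * X4) <= Rabs X3 * Rabs X4)
      by (rewrite <- Rabs_mult, <- Rabs_Ropp; apply Rle_abs).
    assert (Rabs X4 * Rabs X4 <= Rabs X3 * Rabs X3) by (apply Rmult_le_compat; lra).
    assert (Rabs X3 * Rabs X4 <= Rabs X3 * Rabs X3) by (apply Rmult_le_compat_l; lra).
    rewrite <- (pow2_abs X3), <- (pow2_abs X4). nra. }
  assert (S34 : Rabs (X3 + X4) <= Rabs (X1 + X2) + 2 * Rabs X5).
  { replace (X3 + X4) with (- (X1 + X2) - X5 - X6) by lra.
    unfold Rminus. pose proof (Rabs_triang (- (X1 + X2) + - X5) (- X6)).
    pose proof (Rabs_triang (- (X1 + X2)) (- X5)). rewrite !Rabs_Ropp in *. lra. }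
  assert (Cube : forall x, Rabs x <= Rabs X5 -> Rabs (x ^ 3) <= Rabs X3 ^ 2 * Rabs X5).
  { intros x Hx. rewrite <- RPow_abs. pose proof (Rabs_pos x).
    assert (Rabs x * Rabs x <= Rabs X3 * Rabs X3) by nra. nra. }
  pose proof (Cube X5 (Rle_refl _)). pose proof (Cube X6 O56).
  replace (X3 ^ 3 + X4 ^ 3 + X5 ^ 3 + X6 ^ 3)
    with ((X3 + X4) * (X3 ^ 2 - X3 * X4 + X4 ^ 2) + X5 ^ 3 + X6 ^ 3) by ring.
  pose proof (Rabs_triang ((X3 + X4) * (X3 ^ 2 - X3 * X4 + X4 ^ 2) + X5 ^ 3) (X6 ^ 3)).
  pose proof (Rabs_triang ((X3 + X4) * (X3 ^ 2 - X3 * X4 + X4 ^ 2)) (X5 ^ 3)).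
  rewrite Rabs_mult, (Rabs_pos_eq _ Q0) in *.
  assert (Rabs (X3 + X4) * (X3 ^ 2 - X3 * X4 + X4 ^ 2)
            <= (Rabs (X1 + X2) + 2 * Rabs X5) * (3 * Rabs X3 ^ 2))
    by (apply Rmult_le_compat; try lra; apply Rabs_pos).
  lra.
Qed.

(* The top pair nearly cancels when |xi_1^3 + xi_2^3| is dominated by the
   low cube sum and |xi_1| is well separated from |xi_3|:
   |xi_1 + xi_2| |xi_1|^2 <= 2 |xi_1^3 + xi_2^3| <~ |xi_3|^2 (|xi_1 + xi_2| + |xi_5|). *)
Lemma top_pair_nearly_cancels :
  Rabs (X1 ^ 3 + X2 ^ 3) < C0 * Rabs (X3 ^ 3 + X4 ^ 3 + X5 ^ 3 + X6 ^ 3) ->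
  12 * (C0 * Rabs X3 ^ 2) <= Rabs X1 ^ 2 ->
  Rabs (X1 + X2) * Rabs X1 ^ 2 <= 32 * C0 * (Rabs X3 ^ 2 * Rabs X5).
Proof.
  intros Hdom Hsep. pose proof C0_ge_12.
  pose proof (sum_cubes_lower X1 X2). pose proof low_cubes_upper.
  pose proof (Rabs_pos (X1 + X2)). pose proof (Rabs_pos X5).
  assert (C0 * Rabs X3 ^ 2 * Rabs (X1 + X2) <= Rabs X1 ^ 2 * Rabs (X1 + X2) / 12)
    by (pose proof (Rmult_le_compat_r (Rabs (X1 + X2)) _ _ (Rabs_pos _) Hsep); lra).
  assert (0 <= C0 * (Rabs X3 ^ 2 * Rabs X5)) by nonneg.
  nra.
Qed.

(* Bound (2) off Omega_2: the low frequencies see m = 1, so their sum is the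
   cube sum T; the top pair nearly cancels, and both the pair and T are
   O(|xi_3|^2 |xi_5|) = O(|xi_3| |xi_4| |xi_5|). *)
Lemma bound_off_Omega2 :
  ~ (sim K (Rabs X1) (Rabs X2) /\ lsim K N (Rabs X2) /\ ll C0 (Rabs X3) N /\
     sim K (Rabs X3) (Rabs X4) /\
     ll C0 (Rabs (X3 ^ 3 + X4 ^ 3 + X5 ^ 3 + X6 ^ 3)) (Rabs (X1 ^ 3 + X2 ^ 3))) ->
  (sim K (Rabs X1) (Rabs X2) /\ lsim K N (Rabs X2) /\ ll C0 (Rabs X3) N /\
   sim K (Rabs X3) (Rabs X4)) ->
  Rabs M6 <= ((32 * C0 * (C1 + 3) + 8) * K) * (Rabs X3 * Rabs X4 * Rabs X5).
Proof.
  intros Hn Hh.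
  assert (Hc : ~ ll C0 (Rabs (X3 ^ 3 + X4 ^ 3 + X5 ^ 3 + X6 ^ 3)) (Rabs (X1 ^ 3 + X2 ^ 3)))
    by tauto.
  destruct Hh as [[S12 S21] [L2 [L3 [S34 S43]]]].
  pose proof C0_ge_12. apply not_ll in Hc; [| lra].
  unfold lsim in L2. apply ll_mult in L3; [| lra].
  set (T := X3 ^ 3 + X4 ^ 3 + X5 ^ 3 + X6 ^ 3) in *.
  assert (ET : f X3 + f X4 + f X5 + f X6 = T).
  { unfold T. rewrite !cubic_low; try ring; pose proof (Rabs_pos X3); nra. }
  assert (Key : Rabs (X1 + X2) * Rabs X1 ^ 2 <= 32 * C0 * (Rabs X3 ^ 2 * Rabs X5))
    by (apply top_pair_nearly_cancels; [exact Hc | apply separated_scales; nonneg; nra]).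
  set (sg := Rabs (X1 + X2)) in *.
  set (a1 := Rabs X1) in *. set (a3 := Rabs X3) in *. set (a5 := Rabs X5) in *.
  assert (Ha1 : 0 <= a1) by apply Rabs_pos. assert (Ha3 : 0 <= a3) by apply Rabs_pos.
  assert (Ha5 : 0 <= a5) by apply Rabs_pos. assert (Hsg : 0 <= sg) by apply Rabs_pos.
  assert (Pair : Rabs (f X1 + f X2) <= C1 * (a1 ^ 2 * sg)).
  { eapply Rle_trans; [apply pair_cancellation; exact O12 |]. fold a1 sg.
    pose proof (Hm_pos X1). pose proof (Hm_le_1 X1).
    replace (C1 * (a1 ^ 2 * sg)) with (C1 * (a1 ^ 2 * sg) * 1) by ring.
    replace (C1 * (m X1 ^ 2 * a1 ^ 2) * sg) with (C1 * (a1 ^ 2 * sg) * m X1 ^ 2) by ring.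
    apply Rmult_le_compat_l; [nonneg | nra]. }
  assert (HT : Rabs T <= (96 * C0 + 8) * (a3 ^ 2 * a5)).
  { pose proof low_cubes_upper as Up. fold sg a3 a5 T in Up.
    assert (a3 ^ 2 * sg <= a1 ^ 2 * sg)
      by (apply Rmult_le_compat_r; [lra | apply pow_incr; lra]).
    lra. }
  assert (Hfin : a3 ^ 2 * a5 <= K * (a3 * Rabs X4 * a5)).
  { replace (a3 ^ 2 * a5) with (a3 * a5 * a3) by ring.
    replace (K * (a3 * Rabs X4 * a5)) with (a3 * a5 * (K * Rabs X4)) by ring.
    apply Rmult_le_compat_l; nonneg. }
  replace M6 with ((f X1 + f X2) + T) by (rewrite <- ET; ring).
  eapply Rle_trans; [apply Rabs_triang |].
  assert (C1 * (a1 ^ 2 * sg) <= C1 * (32 * C0 * (a3 ^ 2 * a5))) by (apply Rmult_le_compat_l; lra).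
  assert ((32 * C0 * (C1 + 3) + 8) * (a3 ^ 2 * a5) <=
          (32 * C0 * (C1 + 3) + 8) * (K * (a3 * Rabs X4 * a5)))
    by (apply Rmult_le_compat_l; [nonneg | lra]).
  nra.
Qed.

(* 2 xi_1 = (xi_1+xi_2) + (xi_1+xi_3) + (xi_1+xi_4) + (xi_5+xi_6): if the last
   pair is small, one of the first three pair sums is >= |xi_1|/2. *)
Lemma one_pair_large : Rabs (X5 + X6) <= Rabs X1 / 2 ->
  Rabs X1 / 2 <= Rabs (X1 + X2) \/ Rabs X1 / 2 <= Rabs (X1 + X3) \/
  Rabs X1 / 2 <= Rabs (X1 + X4).
Proof.
  intro Hsmall.
  destruct (Rle_lt_dec (Rabs X1 / 2) (Rabs (X1 + X2))); [left; lra |].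
  destruct (Rle_lt_dec (Rabs X1 / 2) (Rabs (X1 + X3))); [right; left; lra |].
  destruct (Rle_lt_dec (Rabs X1 / 2) (Rabs (X1 + X4))); [right; right; lra |].
  exfalso.
  assert (E : 2 * Rabs X1 = Rabs (X1 + X2 + (X1 + X3) + (X1 + X4) + (X5 + X6))).
  { replace (X1 + X2 + (X1 + X3) + (X1 + X4) + (X5 + X6)) with (2 * X1) by lra.
    rewrite Rabs_mult, (Rabs_pos_eq 2); lra. }
  pose proof (Rabs_sum4 (X1 + X2) (X1 + X3) (X1 + X4) (X5 + X6)). lra.
Qed.

(* Off the resonance set of Omega_4 and with |xi_1| >> |xi_5|, the top four
   terms are O(m^2 |xi_1|^2 |xi_5|): pick the large pair, then use the
   four-term cancellation. *)
Lemma top_four_off_resonance :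
  8 * Rabs X5 < Rabs X1 ->
  Rabs (X1 + X2) * Rabs (X1 + X3) * Rabs (X1 + X4) < C0 * (Rabs X5 * Rabs X1 ^ 2) ->
  Rabs (f X1 + f X2 + f X3 + f X4) <= C_four * (m X1 ^ 2 * Rabs X1 ^ 2 * Rabs X5).
Proof.
  intros Hsep Hres.
  assert (H56 : Rabs (X5 + X6) <= 2 * Rabs X5) by (pose proof (Rabs_triang X5 X6); lra).
  assert (Ht : Rabs (X1 + X2 + X3 + X4) <= 2 * Rabs X5).
  { replace (X1 + X2 + X3 + X4) with (- (X5 + X6)) by lra. rewrite Rabs_Ropp. exact H56. }
  destruct one_pair_large as [Hbig | [Hbig | Hbig]]; [lra | | |].
  - apply four_term_resonant; lra.
  - replace (f X1 + f X2 + f X3 + f X4) with (f X1 + f X3 + f X2 + f X4) by ring.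
    replace (X1 + X2 + X3 + X4) with (X1 + X3 + X2 + X4) in Ht by ring.
    apply four_term_resonant; lra.
  - replace (f X1 + f X2 + f X3 + f X4) with (f X1 + f X4 + f X2 + f X3) by ring.
    replace (X1 + X2 + X3 + X4) with (X1 + X4 + X2 + X3) in Ht by ring.
    apply four_term_resonant; lra.
Qed.

(* Bound (3) off Omega_4 (given |xi_4| >> |xi_5|): the two lowest terms are
   O(m^2 |xi_1|^2 |xi_5|) by size; the top four are either dominated by them
   (third condition fails), crudely bounded (|xi_1| <~ |xi_5|), or handled
   by the resonance bound. *)
Lemma bound_off_Omega4 : ll C0 (Rabs X5) (Rabs X4) ->
  ~ (ll C0 (Rabs X5) (Rabs X4) /\
     ll C0 (Rabs X5 * Rabs X1 ^ 2) (Rabs (X1 + X2) * Rabs (X1 + X3) * Rabs (X1 + X4)) /\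
     ll C0 (Rabs (f X5 + f X6)) (Rabs (f X1 + f X2 + f X3 + f X4))) ->
  Rabs M6 <= (16 * C0 + 272 + C_four) * (m X1 ^ 2 * Rabs X1 ^ 2 * Rabs X5).
Proof.
  intros H5 Hn. pose proof C0_ge_12.
  set (B := m X1 ^ 2 * Rabs X1 ^ 2 * Rabs X5).
  set (S4 := f X1 + f X2 + f X3 + f X4).
  assert (HB : 0 <= B) by (unfold B; nonneg).
  assert (HQ : 0 <= C_four) by (unfold C_four; nonneg).
  assert (HQB : 0 <= C_four * B) by (apply Rmult_le_pos; lra).
  assert (HCB : 0 <= C0 * B) by (apply Rmult_le_pos; lra).
  assert (Size : forall x c, Rabs x <= Rabs X1 -> Rabs x <= c * Rabs X5 -> 0 <= c ->
            Rabs (f x) <= 8 * c * B).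
  { intros x c Hx Hxc Hc. eapply Rle_trans; [apply (cubic_size x X1 Hx) |].
    rewrite <- (pow2_abs x). pose proof (Rabs_pos x).
    assert (Rabs x * Rabs x <= Rabs X1 * (c * Rabs X5)) by (apply Rmult_le_compat; lra).
    unfold B. replace (8 * c * (m X1 ^ 2 * Rabs X1 ^ 2 * Rabs X5))
      with (8 * m X1 ^ 2 * Rabs X1 * (Rabs X1 * (c * Rabs X5))) by ring.
    apply Rmult_le_compat_l; [nonneg | nra]. }
  pose proof (Size X5 1 ltac:(lra) ltac:(lra) ltac:(lra)) as F5.
  pose proof (Size X6 1 ltac:(lra) ltac:(lra) ltac:(lra)) as F6.
  assert (H56 : Rabs (f X5 + f X6) <= 16 * B) by (pose proof (Rabs_triang (f X5) (f X6)); lra).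
  assert (Top : Rabs S4 <= (16 * C0 + 256 + C_four) * B).
  { apply not_and_or in Hn. destruct Hn as [Hn | Hn]; [tauto |].
    apply not_and_or in Hn. destruct Hn as [Hres | Hdom].
    - apply not_ll in Hres; [| lra].
      destruct (Rle_lt_dec (Rabs X1) (8 * Rabs X5)) as [Hnear | Hsep].
      + pose proof (Size X1 8 ltac:(lra) ltac:(lra) ltac:(lra)).
        pose proof (Size X2 8 ltac:(lra) ltac:(lra) ltac:(lra)).
        pose proof (Size X3 8 ltac:(lra) ltac:(lra) ltac:(lra)).
        pose proof (Size X4 8 ltac:(lra) ltac:(lra) ltac:(lra)).
        pose proof (Rabs_sum4 (f X1) (f X2) (f X3) (f X4)) as Hs4. fold S4 in Hs4.
        lra.
      + pose proof (top_four_off_resonance Hsep ltac:(lra)) as Hs4. fold S4 B in Hs4.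
        lra.
    - apply not_ll in Hdom; [| lra]. fold S4 in Hdom.
      assert (C0 * Rabs (f X5 + f X6) <= C0 * (16 * B)) by (apply Rmult_le_compat_l; lra).
      lra. }
  replace M6 with (S4 + f X5 + f X6) by (unfold S4; ring).
  pose proof (Rabs_triang (S4 + f X5) (f X6)). pose proof (Rabs_triang S4 (f X5)).
  lra.
Qed.

End Ordered.

Definition C_six : R := (48 * C0 ^ 2 + C1 * C0 + 32) + (32 * C0 * (C1 + 3) + 8) * K
                        + (16 * C0 + 272 + C_four).

Lemma C_six_pos : 0 < C_six.
Proof.
  pose proof C0_ge_12. unfold C_six, C_four.
  assert (0 <= C1 * C0) by nonneg. assert (0 <= (32 * C0 * (C1 + 3) + 8) * K) by nonneg.
  assert (0 <= C0 * C2) by nonneg. nra.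
Qed.

Lemma six_frequency_bounds X1 X2 X3 X4 X5 X6 :
  Rabs X2 <= Rabs X1 -> Rabs X3 <= Rabs X2 -> Rabs X4 <= Rabs X3 -> Rabs X5 <= Rabs X4 ->
  Rabs X6 <= Rabs X5 -> X1 + X2 + X3 + X4 + X5 + X6 = 0 ->
  ~ (sim K (Rabs X1) (Rabs X2) /\ lsim K N (Rabs X2) /\ ll C0 (Rabs X3) N /\
     sim K (Rabs X3) (Rabs X4) /\
     ll C0 (Rabs (X3 ^ 3 + X4 ^ 3 + X5 ^ 3 + X6 ^ 3)) (Rabs (X1 ^ 3 + X2 ^ 3))) ->
  ~ (ll C0 (Rabs X3) (Rabs X1) /\ ll C0 (Rabs X3 ^ 2) (Rabs (X1 + X2) * Rabs X1)) ->
  ~ (ll C0 (Rabs X5) (Rabs X4) /\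
     ll C0 (Rabs X5 * Rabs X1 ^ 2) (Rabs (X1 + X2) * Rabs (X1 + X3) * Rabs (X1 + X4)) /\
     ll C0 (Rabs (f X5 + f X6)) (Rabs (f X1 + f X2 + f X3 + f X4))) ->
  let M6 := Rabs (f X1 + f X2 + f X3 + f X4 + f X5 + f X6) in
  M6 <= C_six * (m X1 ^ 2 * Rabs X1 * Rabs X3 ^ 2) /\
  ((sim K (Rabs X1) (Rabs X2) /\ lsim K N (Rabs X2) /\ ll C0 (Rabs X3) N /\
    sim K (Rabs X3) (Rabs X4)) -> M6 <= C_six * (Rabs X3 * Rabs X4 * Rabs X5)) /\
  (ll C0 (Rabs X5) (Rabs X4) -> M6 <= C_six * (m X1 ^ 2 * Rabs X1 ^ 2 * Rabs X5)).
Proof.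
  intros O12 O23 O34 O45 O56 Hsum Hn2 Hn3 Hn4 M6.
  pose proof C0_ge_12. unfold C_six.
  assert (0 <= C1 * C0) by nonneg. assert (0 <= (32 * C0 * (C1 + 3) + 8) * K) by nonneg.
  assert (0 <= C_four) by (unfold C_four; nonneg).
  assert (Weaken : forall c A B, M6 <= c * A -> 0 <= A -> 0 <= c -> c <= B -> M6 <= B * A)
    by (intros c A B HM HA Hc HcB; pose proof (Rmult_le_compat_r A c B HA HcB); lra).
  split; [| split].
  - eapply Weaken; [apply bound_off_Omega3; auto | nonneg | nonneg | nra].
  - intro Hh. eapply Weaken; [apply bound_off_Omega2; auto | nonneg | nonneg | nra].
  - intro Hh. eapply Weaken; [apply bound_off_Omega4; eauto | nonneg | nonneg | nra].
Qed.

End SixFrequencies.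

(* Finite sums as folds over lists, to reindex them by a permutation. *)
Lemma fold_right_Rplus_shift (l : list R) a : fold_right Rplus a l = fold_right Rplus 0 l + a.
Proof. induction l as [| x l IH]; simpl; [ring | rewrite IH; ring]. Qed.

Lemma sumR_as_fold n h : sumR n h = fold_right Rplus 0 (map h (seq 0 n)).
Proof.
  induction n as [| n IH]; [reflexivity |].
  rewrite seq_S, map_app, fold_right_app. simpl. rewrite fold_right_Rplus_shift, IH. ring.
Qed.

Lemma fold_right_Rplus_perm (l l' : list R) :
  Permutation l l' -> fold_right Rplus 0 l = fold_right Rplus 0 l'.
Proof. induction 1; simpl; lra. Qed.

Lemma sumR_perm n p h : (forall i, (i < n)%nat -> (p i < n)%nat) ->
  (forall i j, (i < n)%nat -> (j < n)%nat -> p i = p j -> i = j) ->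
  sumR n (fun i => h (p i)) = sumR n h.
Proof.
  intros Hr Hi. rewrite !sumR_as_fold, <- map_map.
  apply fold_right_Rplus_perm, Permutation_map, Permutation_map_same_l.
  - apply FinFun.Injective_map_NoDup_in; [| apply seq_NoDup].
    intros x y Hx Hy. apply in_seq in Hx. apply in_seq in Hy. apply Hi; lia.
  - intros z Hz. apply in_map_iff in Hz. destruct Hz as [x [<- Hx]]. apply in_seq in Hx.
    apply in_seq. specialize (Hr x). lia.
Qed.

Lemma Msum_cubic phi N n xi :
  Msum phi N n xi = sumR n (fun j => cubic_of (mult phi N) (xi j)).
Proof. reflexivity. Qed.

Section Sorted.
Variables (n : nat) (xi : nat -> R) (p : nat -> nat).
Hypothesis Hn : n = 5%nat \/ n = 6%nat.
Hypothesis Hsort : sorting_perm n xi p.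

Local Notation X := (xstar n xi p).

Lemma xstar_decreasing : forall j, (1 <= j <= 5)%nat -> Rabs (X (S j)) <= Rabs (X j).
Proof.
  destruct Hsort as (_ & _ & Ho). intros j Hj.
  assert (Hj' : (j = 1 \/ j = 2 \/ j = 3 \/ j = 4 \/ j = 5)%nat) by lia.
  unfold xstar. destruct Hn as [-> | ->];
    destruct Hj' as [-> | [-> | [-> | [-> | ->]]]]; simpl;
    first [apply Ho; lia | rewrite Rabs_R0; apply Rabs_pos].
Qed.

Lemma sumR_sorted h : h 0 = 0 ->
  sumR n (fun j => h (xi j)) = h (X 1) + h (X 2) + h (X 3) + h (X 4) + h (X 5) + h (X 6).
Proof.
  intro H0. destruct Hsort as (Hr & Hi & _).
  rewrite <- (sumR_perm n p (fun j => h (xi j)) Hr Hi).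
  unfold xstar. destruct Hn as [-> | ->]; simpl; rewrite ?H0; ring.
Qed.

Lemma xstar_sum_zero : sumR n xi = 0 -> X 1 + X 2 + X 3 + X 4 + X 5 + X 6 = 0.
Proof. intro H. rewrite <- (sumR_sorted (fun x => x)); [exact H | reflexivity]. Qed.

End Sorted.

Lemma tail_cubes n xi p : n = 5%nat \/ n = 6%nat ->
  sumR (n - 2) (fun j => xstar n xi p (j + 3) ^ 3)
  = xstar n xi p 3 ^ 3 + xstar n xi p 4 ^ 3 + xstar n xi p 5 ^ 3 + xstar n xi p 6 ^ 3.
Proof. intros [-> | ->]; unfold xstar; simpl; ring. Qed.

(* The main theorem: C0min = 12 K^2, and C depends only on K, C0 and the
   symbol constants of phi. *)
Theorem mainTheorem3 :
  forall (k : nat), (k = 3%nat \/ k = 4%nat) ->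
  forall (s : R), 1/2 <= s < 1 ->
  forall (phi : R -> R), profile s phi ->
  forall (K : R), 1 <= K ->
  exists C0min : R, 0 < C0min /\
  forall (C0 : R), C0min <= C0 ->
  exists C : R, 0 < C /\
  forall (N lam : R), 1 <= N -> 1 <= lam ->
  forall (xi : nat -> R) (p : nat -> nat),
    in_Gamma (k + 2) lam xi ->
    sorting_perm (k + 2) xi p ->
    ~ Omega phi N K C0 (k + 2) xi p ->
    let X := xstar (k + 2) xi p in
    let a j := Rabs (X j) in
    let m1 := mult phi N (X 1%nat) in
    let M := Rabs (Msum phi N (k + 2) xi) in
    (* (1) *)
    M <= C * (m1 ^ 2 * a 1%nat * a 3%nat ^ 2) /\
    (* (2) *)
    ((sim K (a 1%nat) (a 2%nat) /\ lsim K N (a 2%nat) /\ ll C0 (a 3%nat) N /\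
      sim K (a 3%nat) (a 4%nat)) ->
     M <= C * (a 3%nat * a 4%nat * a 5%nat)) /\
    (* (3) *)
    (ll C0 (a 5%nat) (a 4%nat) ->
     M <= C * (m1 ^ 2 * a 1%nat ^ 2 * a 5%nat)).
Proof.
  intros k Hk s Hs phi Hp K HK.
  destruct (proj1 Hp) as [D [HD0 HD]].
  destruct (cubic_lipschitz s phi D Hs Hp HD0 HD) as [C1 [HC1 HL1]].
  destruct (cubic_second_difference s phi D Hs Hp HD0 HD) as [C2 [HC2 HL2]].
  exists (12 * K ^ 2). split; [nra |].
  intros C0 HC0. exists (C_six K C0 C1 C2). split; [apply C_six_pos; assumption |].
  intros N lam HN Hlam xi p Hg Hsort HnO. cbv zeta.
  assert (Hn : (k + 2 = 5 \/ k + 2 = 6)%nat) by lia.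
  pose proof (xstar_decreasing _ _ _ Hn Hsort) as Hdec.
  rewrite Msum_cubic, (sumR_sorted _ _ _ Hn Hsort (cubic_of (mult phi N)))
    by (unfold cubic_of; ring).
  unfold Omega, Omega1, Omega2, Omega3, Omega4 in HnO.
  rewrite (tail_cubes _ _ _ Hn) in HnO.
  apply (six_frequency_bounds (mult phi N) N K C0 C1 C2 HK HC0 HC1 HC2
           (mult_pos s phi N Hp) (mult_le_1 s phi N Hp) (mult_low s phi N Hp HN)
           (mult_abs s phi N Hp HN) (mult_antitone s phi N Hp HN)
           (mult_weight_quasi_monotone s phi N Hp HN Hs)
           (mult_lipschitz phi N HN C1 HL1) (mult_second_difference phi N HN C2 HL2));
    try (apply Hdec; lia); try (intro; apply HnO; tauto).
  apply xstar_sum_zero; [exact Hn | exact Hsort | apply Hg].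
Qed.
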